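(* Let $(G,\prec)$ be an ordered graph with vertices $a\prec b\prec c\prec d$ such that there is a crossing sequence from $a$ to $c$ and a crossing sequence from $b$ to $d$. Then there is a crossing sequence from $a$ to $d$.
   Context: An ordered graph is a pair $(G,\prec)$ where $G$ is a finite graph and $\prec$ a linear order on $V(G)$. For vertices $p\prec q\prec r\prec s$ with $pr,qs\in E(G)$, we say $pr$ crosses $qs$. For distinct vertices $u\prec v$, a crossing sequence from $u$ to $v$ is a sequence of distinct edges $e_1,\dots,e_k$ such that $u$ is the smaller end of $e_1$, $v$ is the larger end of $e_k$, and $e_i$ crosses $e_{i+1}$ for $1\le i<k$. *)

From mathcomp Require Import all_boot.
Set Implicit Arguments. Unset Strict Implicit. Unset Printing Implicit Defensive.

(* An ordered graph: vertex set a finType T, a strict linear order [lt] on T,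
   and an adjacency relation [adj] (symmetric, irreflexive). *)
Definition strict_linear_order (T : finType) (lt : rel T) : Prop :=
  irreflexive lt /\ transitive lt /\ (forall x y, x != y -> lt x y || lt y x).

Definition simple_graph (T : finType) (adj : rel T) : Prop :=
  symmetric adj /\ irreflexive adj.

(* An edge is represented as the ordered pair (smaller end, larger end). *)
Definition is_edge (T : finType) (lt adj : rel T) (f : T * T) : bool :=
  lt f.1 f.2 && adj f.1 f.2.

Definition crosses_ord (T : finType) (lt : rel T) (f g : T * T) : bool :=
  [&& lt f.1 g.1, lt g.1 f.2 & lt f.2 g.2].

Definition crosses (T : finType) (lt : rel T) (f g : T * T) : bool :=
  crosses_ord lt f g || crosses_ord lt g f.

Definition crossing_sequence (T : finType) (lt adj : rel T) (u v : T)
    (s : seq (T * T)) : Prop :=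
  exists (e1 : T * T) (s' : seq (T * T)),
    [/\ s = e1 :: s', all (is_edge lt adj) s, uniq s &
        [/\ e1.1 = u, (last e1 s').2 = v & path (crosses lt) e1 s']].

Definition has_crossing_sequence (T : finType) (lt adj : rel T) (u v : T) : Prop :=
  exists s, crossing_sequence lt adj u v s.

From mathcomp Require Import all_boot zify.

Set Implicit Arguments.
Unset Strict Implicit.
Unset Printing Implicit Defensive.

(* Rank the vertices so that the order becomes the order of nat.  The open
   intervals spanned by the edges of a crossing sequence from u to v cover
   every point strictly between u and v.  Let P go from a to c and Q from b
   to d, and suppose no edge of P meets (equals or crosses) an edge of Q.
   An edge g crossing no edge of a crossing sequence either nests all of its
   edges or none of them, since two crossing edges cannot lie on different
   sides of g.  Choose e in P covering b and g in Q covering c.  Then e nests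
   the first edge of Q, which starts at b, hence nests g; symmetrically g
   nests the last edge of P, which ends at c, hence nests e.  So e = g, a
   contradiction.  Once an edge of P meets an edge of Q, the crossing graph
   on edges joins the first edge of P to the last edge of Q, and a shortest
   such walk is a crossing sequence from a to d. *)

Lemma strict_linear_order_rank (T : finType) (lt : rel T) :
  strict_linear_order lt ->
  exists2 r : T -> nat, injective r & forall x y, lt x y = (r x < r y).
Proof.
case=> ltxx [lt_trans lt_total].
pose r x := #|[pred y | lt y x]|.
have r_mono x y : lt x y -> r x < r y.
  move=> lt_xy; apply/proper_card/properP; split.
    by apply/subsetP => z; rewrite !inE => /lt_trans; apply.
  by exists x; rewrite !inE ?ltxx.
have r_total x y : x != y -> (r x < r y) || (r y < r x).
  by case/lt_total/orP => /r_mono ->; rewrite ?orbT.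
exists r => [x y r_xy | x y].
  by apply/eqP/negPn/negP => /r_total; rewrite r_xy ltnn.
apply/idP/idP => [/r_mono // | r_xy].
have x_neq_y : x != y by apply: contraTneq r_xy => ->; rewrite ltnn.
case/orP: (lt_total _ _ x_neq_y) => // /r_mono.
by move/(ltn_trans r_xy); rewrite ltnn.
Qed.

Lemma crossesC (T : finType) (lt : rel T) : symmetric (crosses lt).
Proof. by move=> f g; rewrite /crosses orbC. Qed.

Section RankedCrossings.

Variables (T : finType) (lt : rel T) (r : T -> nat).
Hypothesis ltE : forall x y, lt x y = (r x < r y).

Lemma crossesE f g :
  crosses lt f g =
  [&& r f.1 < r g.1, r g.1 < r f.2 & r f.2 < r g.2]
  || [&& r g.1 < r f.1, r f.1 < r g.2 & r g.2 < r f.2].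
Proof. by rewrite /crosses /crosses_ord !ltE. Qed.

Definition nests (g h : T * T) : bool := (r g.1 <= r h.1) && (r h.2 <= r g.2).

Lemma nests_anti : injective r -> antisymmetric nests.
Proof.
move=> r_inj [x1 x2] [y1 y2]; rewrite /nests /= => /andP[xy yx].
have -> : x1 = y1 by apply: r_inj; lia.
by have -> : x2 = y2 by apply: r_inj; lia.
Qed.

Lemma noncrossing_nests g h :
  ~~ crosses lt g h -> (r g.1 < r h.1 < r g.2) || (r g.1 < r h.2 < r g.2) ->
  nests g h.
Proof. by rewrite crossesE /nests; lia. Qed.

Lemma nests_crosses g x y :
  nests g x -> crosses lt x y -> ~~ crosses lt g y -> nests g y.
Proof.
move=> gx xy gy; apply: noncrossing_nests gy _.
move: gx; rewrite /nests => /andP[g1x1 x2g2].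
by rewrite crossesE in xy; case/orP: xy => /and3P[*]; apply/orP; [left | right]; lia.
Qed.

Lemma crosses_nests_eq g x y :
  crosses lt x y -> ~~ crosses lt g x -> ~~ crosses lt g y ->
  nests g x = nests g y.
Proof.
move=> xy gx gy; apply/idP/idP => [gnx | gny]; first exact: nests_crosses gnx xy gy.
by apply: nests_crosses gny _ gx; rewrite crossesC.
Qed.

Lemma path_nests_eq g x s :
  path (crosses lt) x s -> {in x :: s, forall h, ~~ crosses lt g h} ->
  {in x :: s, forall h, nests g h = nests g x}.
Proof.
elim: s x => [|y s IHs] x /=; first by move=> _ _ h /[1!inE] /eqP ->.
case/andP=> xy ys g_free h /[1!inE] /predU1P[-> // | hys].
have g_free_ys : {in y :: s, forall h, ~~ crosses lt g h}.
  by move=> k ks; apply: g_free; rewrite inE ks orbT.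
by rewrite (IHs y) // (crosses_nests_eq xy) // g_free // !inE eqxx ?orbT.
Qed.

Lemma path_crosses_cover x s z :
  path (crosses lt) x s -> r x.1 < r z < r (last x s).2 ->
  exists2 e, e \in x :: s & r e.1 < r z < r e.2.
Proof.
elim: s x => [|y s IHs] x /=; first by exists x; rewrite ?mem_head.
case/andP=> xy ys z_in.
have [z_x | x_z] := ltnP (r z) (r x.2); first by exists x; rewrite ?mem_head //; lia.
have [|e ey z_e] := IHs y ys; first by move: xy; rewrite crossesE; lia.
by exists e; rewrite // inE ey orbT.
Qed.

Hypothesis r_inj : injective r.

Lemma crossing_paths_meet p1 ps q1 qs :
  path (crosses lt) p1 ps -> path (crosses lt) q1 qs ->
  lt p1.1 q1.1 -> lt q1.1 (last p1 ps).2 -> lt (last p1 ps).2 (last q1 qs).2 ->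
  has (fun e => has (fun g => (e == g) || crosses lt e g) (q1 :: qs)) (p1 :: ps).
Proof.
rewrite !ltE => crossP crossQ p1_q1 q1_c c_d.
apply/negPn/negP => /hasPn disjointPQ.
have apart : {in p1 :: ps & q1 :: qs, forall e g, (e != g) && ~~ crosses lt e g}.
  by move=> e g eP gQ; move/hasPn: (disjointPQ e eP) => /(_ g gQ); rewrite negb_or.
have b_inside_P : r p1.1 < r q1.1 < r (last p1 ps).2 by rewrite p1_q1.
have c_inside_Q : r q1.1 < r (last p1 ps).2 < r (last q1 qs).2 by rewrite q1_c.
have [e eP b_in_e] := path_crosses_cover crossP b_inside_P.
have [g gQ c_in_g] := path_crosses_cover crossQ c_inside_Q.
have e_free : {in q1 :: qs, forall h, ~~ crosses lt e h}.
  by move=> h hQ; case/andP: (apart e h eP hQ).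
have g_free : {in p1 :: ps, forall h, ~~ crosses lt g h}.
  by move=> h hP; rewrite crossesC; case/andP: (apart h g hP gQ).
have e_nests_g : nests e g.
  rewrite (path_nests_eq crossQ e_free gQ).
  by apply: noncrossing_nests (e_free _ (mem_head _ _)) _; rewrite b_in_e.
have g_nests_e : nests g e.
  rewrite (path_nests_eq crossP g_free eP) -(path_nests_eq crossP g_free (mem_last _ _)).
  by apply: noncrossing_nests (g_free _ (mem_last _ _)) _; rewrite c_in_g orbT.
have e_eq_g : e = g by apply: nests_anti; rewrite ?e_nests_g.
by case/andP: (apart e g eP gQ); rewrite e_eq_g eqxx.
Qed.

End RankedCrossings.

Definition crossing_rel (T : finType) (lt adj : rel T) : rel (T * T) :=
  [rel f g | [&& is_edge lt adj f, is_edge lt adj g & crosses lt f g]].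

Section CrossingGraph.

Variables (T : finType) (lt adj : rel T).
Local Notation R := (crossing_rel lt adj).

Lemma crossing_rel_sym : symmetric R.
Proof. by move=> f g; rewrite /crossing_rel /= crossesC andbCA. Qed.

Lemma crossing_path_connect x s y z :
  all (is_edge lt adj) (x :: s) -> path (crosses lt) x s ->
  y \in x :: s -> z \in x :: s -> connect R y z.
Proof.
move=> edges cross ys zs.
have pathR : path R x s.
  elim: s x edges cross {ys zs} => //= y' s IHs x /and3P[x_edge y_edge s_edges].
  by case/andP=> xy ys; rewrite /crossing_rel /= x_edge y_edge xy IHs //= y_edge.
apply: connect_trans (path_connect pathR zs).
by rewrite (sym_connect_sym crossing_rel_sym); exact: (path_connect pathR ys).
Qed.

Lemma connect_crossing_sequence x y :
  is_edge lt adj x -> connect R x y -> has_crossing_sequence lt adj x.1 y.2.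
Proof.
move=> x_edge /connectP[p pR ->]; case: (shortenP pR) => {pR} p' pR' up' _.
have edges : all (is_edge lt adj) (x :: p').
  elim: p' x x_edge pR' {up'} => [|y' p' IHs] x x_edge /=; first by rewrite x_edge.
  by case/andP=> /and3P[_ y_edge _] /(IHs _ y_edge); rewrite x_edge.
exists (x :: p'), x, p'; split=> //.
by split=> //; apply: sub_path pR' => f g /and3P[].
Qed.

End CrossingGraph.

Theorem lemma3p1 (T : finType) (lt adj : rel T)
    (Hlt : strict_linear_order lt) (Hadj : simple_graph adj)
    (a b c d : T) (Hab : lt a b) (Hbc : lt b c) (Hcd : lt c d) :
  has_crossing_sequence lt adj a c ->
  has_crossing_sequence lt adj b d ->
  has_crossing_sequence lt adj a d.
Proof.
move=> [_ [p1 [ps [-> edgesP _ [p1_a c_end crossP]]]]].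
move=> [_ [q1 [qs [-> edgesQ _ [q1_b d_end crossQ]]]]].
subst a b c d.
have [r r_inj ltE] := strict_linear_order_rank Hlt.
have /hasP[e eP /hasP[g gQ e_meets_g]] :=
  crossing_paths_meet ltE r_inj crossP crossQ Hab Hbc Hcd.
apply: (connect_crossing_sequence (allP edgesP p1 (mem_head _ _))).
apply: connect_trans (crossing_path_connect edgesP crossP (mem_head _ _) eP) _.
apply: connect_trans (crossing_path_connect edgesQ crossQ gQ (mem_last _ _)).
case/orP: e_meets_g => [/eqP-> | e_g]; first exact: connect0.
by apply: connect1; rewrite /crossing_rel /= (allP edgesP e eP) (allP edgesQ g gQ).
Qed.
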